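(* Let $K$ be a field and let $P$ be a poset that is not locally finite. Then there is no locally finite poset $Q$ such that $FI(P)$ is isomorphic (as a $K$-algebra) to the incidence algebra $I(Q)$.
   Context: $K$ is a field, $P$ an arbitrary poset. $I(P)$ is the set of functions $\alpha$ assigning to each pair $x\le y$ in $P$ a value $\alpha(x,y)\in K$. An element $\alpha\in I(P)$ is a finitary series if for all $x<y$ in $P$ there are only finitely many pairs $(u,v)$ with $x\le u<v\le y$ and $\alpha(u,v)\neq0$; $FI(P)$ is the set of finitary series. $FI(P)$ is an associative $K$-algebra under pointwise addition and convolution $(\alpha\beta)(x,y)=\sum_{x\le z\le y}\alpha(x,z)\beta(z,y)$. A poset $Q$ is locally finite if every interval $[x,y]=\{z: x\le z\le y\}$ is finite; for such $Q$, $I(Q)$ (all functions on pairs $x\le y$ in $Q$) is the usual incidence algebra under convolution. *)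

From HB Require Import structures.
From mathcomp Require Import all_boot all_algebra.
From Stdlib Require List.
Set Implicit Arguments. Unset Strict Implicit. Unset Printing Implicit Defensive.
Import GRing.Theory.
Local Open Scope ring_scope.

Record is_poset (T : Type) (le : T -> T -> Prop) : Prop := {
  poset_refl : forall x, le x x;
  poset_antisym : forall x y, le x y -> le y x -> x = y;
  poset_trans : forall x y z, le x y -> le y z -> le x z }.

Definition locally_finite (T : Type) (le : T -> T -> Prop) : Prop :=
  forall x y, exists l : list T, forall z, le x z -> le z y -> List.In z l.

(* Elements of I(P) are represented as functions T -> T -> K that vanish
   outside the pairs x <= y (their values there are irrelevant data). *)
Definition supported (K : fieldType) (T : Type) (le : T -> T -> Prop)
  (a : T -> T -> K) : Prop :=
  forall x y, ~ le x y -> a x y = 0.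

Definition finitary (K : fieldType) (T : Type) (le : T -> T -> Prop)
  (a : T -> T -> K) : Prop :=
  forall x y, le x y -> x <> y ->
    exists l : list (T * T), forall u v,
      le x u -> le u v -> u <> v -> le v y -> a u v != 0 -> List.In (u, v) l.

Definition in_FI (K : fieldType) (T : Type) (le : T -> T -> Prop)
  (a : T -> T -> K) : Prop := supported le a /\ finitary le a.

Definition in_I (K : fieldType) (T : Type) (le : T -> T -> Prop)
  (a : T -> T -> K) : Prop := supported le a.

(* c is the convolution a*b:  c(x,y) = sum_{x<=z<=y} a(x,z) b(z,y) for x <= y,
   where the sum has only finitely many nonzero terms: it is computed over a
   duplicate-free finite list s of elements of [x,y] outside of which all
   terms vanish. *)
Definition conv (K : fieldType) (T : Type) (le : T -> T -> Prop)
  (a b c : T -> T -> K) : Prop :=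
  forall x y, le x y ->
    exists s : list T,
      [/\ List.NoDup s,
          (forall z, List.In z s -> le x z /\ le z y),
          (forall z, le x z -> le z y -> ~ List.In z s -> a x z * b z y = 0)
        & c x y = foldr (fun z acc => a x z * b z y + acc) 0 s].

(* phi is a K-algebra isomorphism FI(P) -> I(Q): it maps FI(P) into I(Q),
   bijectively, and preserves addition, scalar multiplication and the
   convolution product (unit preservation follows from bijectivity). *)
Definition FI_I_alg_iso (K : fieldType) (T : Type) (leP : T -> T -> Prop)
  (U : Type) (leQ : U -> U -> Prop) (phi : (T -> T -> K) -> (U -> U -> K)) : Prop :=
  [/\ (forall a, in_FI leP a -> in_I leQ (phi a)),
      (forall a b, in_FI leP a -> in_FI leP b -> phi a = phi b -> a = b),
      (forall g, in_I leQ g -> exists2 a, in_FI leP a & phi a = g),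
      (forall a b, in_FI leP a -> in_FI leP b ->
         phi (fun x y => a x y + b x y) = (fun u v => phi a u v + phi b u v))
    & (forall (k : K) a, in_FI leP a ->
         phi (fun x y => k * a x y) = (fun u v => k * phi a u v))] /\
  (forall a b c, in_FI leP a -> in_FI leP b -> in_FI leP c ->
     conv leP a b c -> conv leQ (phi a) (phi b) (phi c)).

From HB Require Import structures.
From mathcomp Require Import all_boot all_algebra.
From mathcomp Require Import boolp.
Set Implicit Arguments. Unset Strict Implicit. Unset Printing Implicit Defensive.
Import GRing.Theory.
Local Open Scope ring_scope.

(* Choose x <= y in P with [x,y] infinite and use the matrix
   units e_pq of FI(P), which satisfy e_xz * e_z'y = delta(z,z') e_xy for
   z in [x,y].  If phi : FI(P) -> I(Q) is an isomorphism, phi(e_xy) is nonzero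
   at some u <= v of Q.  Write the finite interval [u,v] as w_1, ..., w_n and
   take distinct z_1, ..., z_m in [x,y].  Expanding phi(e_xz_i) * phi(e_z_j y)
   at (u,v) over [u,v] shows that the m x n matrix A_ik = phi(e_xz_i)(u,w_k)
   and the n x m matrix B_kj = phi(e_z_j y)(w_k,v) satisfy A B = c I with
   c = phi(e_xy)(u,v) <> 0, hence m <= rank(A B) <= n.  Taking m = n + 1 is
   absurd. *)

Lemma In_mem (T : eqType) (x : T) (s : seq T) : List.In x s <-> x \in s.
Proof.
elim: s => [|y s IH] //=; rewrite in_cons.
split=> [[->|/IH->]|/orP[/eqP->|/IH]]; rewrite ?eqxx ?orbT; auto.
Qed.

Lemma NoDup_uniq (T : eqType) (s : seq T) : List.NoDup s -> uniq s.
Proof.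
elim=> [|x {}s xs _ IH] //=; rewrite IH andbT.
by apply/negP => /In_mem.
Qed.

Lemma foldr_sum (R : nmodType) (I : Type) (F : I -> R) (s : seq I) :
  foldr (fun i acc => F i + acc) 0 s = \sum_(i <- s) F i.
Proof. by rewrite -foldr_map foldrE big_map. Qed.

Lemma not_locally_finite_interval (T : Type) (le : T -> T -> Prop) :
  ~ locally_finite le ->
  exists x y, forall l : list T, exists z, (le x z /\ le z y) /\ ~ List.In z l.
Proof.
move/existsNP => [x /existsNP [y /forallNP Hl]]; exists x, y => l.
have /existsNP [z /not_implyP [xz /not_implyP [zy nz]]] := Hl l.
by exists z.
Qed.

Lemma infinite_uniq_seq (T : Type) (S : T -> Prop) :
  (forall l : list T, exists z, S z /\ ~ List.In z l) ->
  forall n, exists zs : seq {classic T},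
    [/\ size zs = n, uniq zs & forall z, z \in zs -> S z].
Proof.
move=> Hinf; elim=> [|n [zs [<- uzs Szs]]]; first by exists [::].
have [z [Sz zNzs]] := Hinf zs.
exists (z :: zs); split=> //=; first by rewrite uzs andbT; apply/negP => /In_mem.
by move=> w; rewrite in_cons => /orP[/eqP->|/Szs].
Qed.

Definition enumerates_interval (U : Type) (le : U -> U -> Prop) (u v : U)
  (L : seq {classic U}) : Prop :=
  uniq L /\ forall w, w \in L <-> le u w /\ le w v.

Lemma interval_enum (U : Type) (le : U -> U -> Prop) :
  locally_finite le -> forall u v, exists L, enumerates_interval le u v L.
Proof.
move=> lf u v; have [l Hl] := lf u v.
exists (@undup {classic U} [seq w <- l | `[< le u w /\ le w v >]]).
split=> [|w]; first exact: undup_uniq.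
rewrite mem_undup mem_filter; split=> [/andP[/asboolP //]|[uw wv]].
by rewrite asboolT //; apply/In_mem; exact: Hl.
Qed.

Lemma conv_sum (K : fieldType) (U : Type) (le : U -> U -> Prop)
  (a b c : U -> U -> K) (u v : U) (L : seq {classic U}) :
  le u v -> conv le a b c -> enumerates_interval le u v L ->
  c u v = \sum_(w <- L) a u w * b w v.
Proof.
move=> uv cv [uL HL]; have [s [sND sI sZ ->]] := cv u v uv.
have sE w : List.In w s <-> w \in (s : seq {classic U}).
  exact: (@In_mem {classic U}).
rewrite (foldr_sum (fun w : {classic U} => a u w * b w v)).
apply: perm_big_supp; apply: uniq_perm; rewrite ?filter_uniq //.
  exact: NoDup_uniq.
move=> w; rewrite !mem_filter; apply/andP/andP => -[nz ws]; split=> //.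
  by apply/HL; apply/sI/sE.
have [uw wv] := (HL w).1 ws; apply/sE; apply: contrapT => ws'.
by move: nz; rewrite (sZ w uw wv ws') eqxx.
Qed.

Lemma scalar_factor_dim (K : fieldType) m n (A : 'M[K]_(m, n))
  (B : 'M[K]_(n, m)) (c : K) : c != 0 -> A *m B = c%:M -> (m <= n)%N.
Proof.
move=> c0 AB; have := mxrankM_maxl A B.
rewrite AB -scalemx1 mxrank_scale_nz // mxrank1 => /leq_trans; apply.
exact: rank_leq_col.
Qed.

Section MatrixUnits.
Variables (K : fieldType) (T : Type) (le : T -> T -> Prop).

Definition munit (p q : T) : T -> T -> K :=
  fun s t => if `[< s = p >] && `[< t = q >] then 1 else 0.

Definition kdelta (z z' : T) : K := if `[< z = z' >] then 1 else 0.

Lemma munit_FI p q : le p q -> in_FI le (munit p q).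
Proof.
move=> pq; split=> [s t nst|x y _ _]; rewrite /munit.
  by case: asboolP => [sp|//]; case: asboolP => [tq|//]; subst; case: nst.
exists [:: (p, q)] => s t _ _ _ _.
by case: asboolP => [sp|_]; case: asboolP => [tq|_] /=; rewrite ?eqxx //; subst; left.
Qed.

Lemma scale_FI (k : K) (a : T -> T -> K) :
  in_FI le a -> in_FI le (fun s t => k * a s t).
Proof.
move=> [sa fa]; split=> [s t nst|x y xy nxy]; first by rewrite sa ?mulr0.
have [l Hl] := fa x y xy nxy; exists l => u v xu uv nuv vy.
by rewrite mulf_eq0 negb_or => /andP[_]; exact: Hl.
Qed.

Lemma conv_munit x y z z' : le x z -> le z y ->
  conv le (munit x z) (munit z' y) (fun s t => kdelta z z' * munit x y s t).
Proof.
move=> xz zy s t _; rewrite /munit /kdelta.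
have [-> | sx] := asboolP (s = x); last first.
  exists [::]; split=> //; first exact: List.NoDup_nil.
    by move=> w _ _ _; rewrite mul0r.
  by rewrite mulr0.
have [-> | ty] := asboolP (t = y); last first.
  exists [::]; split=> //; first exact: List.NoDup_nil.
    by move=> w _ _ _; rewrite andbF mulr0.
  by rewrite mulr0.
exists [:: z]; split.
- exact/List.NoDup_cons/List.NoDup_nil.
- by move=> w [<-|[]].
- by move=> w _ _ wz; case: asboolP => [wz'|]; [case: wz; left | rewrite mul0r].
- by rewrite /= addr0 !(asboolT (erefl _)) /=; case: asboolP; rewrite ?mulr1 ?mul1r.
Qed.

Lemma kdelta_nth (zs : seq {classic T}) (x0 : {classic T}) (i j : nat) :
  uniq zs -> (i < size zs)%N -> (j < size zs)%N ->
  kdelta (nth x0 zs i) (nth x0 zs j) = (i == j)%:R.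
Proof.
move=> uzs ilt jlt; rewrite /kdelta -(nth_uniq x0 ilt jlt uzs).
by case: asboolP => [->|ne]; [rewrite eqxx | case: eqP].
Qed.

End MatrixUnits.

Section FIIsomorphism.
Variables (K : fieldType) (T : Type) (leP : T -> T -> Prop).
Variables (U : Type) (leQ : U -> U -> Prop).
Variable phi : (T -> T -> K) -> (U -> U -> K).
Hypothesis iso : FI_I_alg_iso leP leQ phi.

(* Since phi is injective and K-linear, phi(e_xy) is a nonzero element of
   I(Q); being supported, it is nonzero at some pair u <= v. *)
Lemma iso_munit_nonzero x y : leP x y ->
  exists u v, leQ u v /\ phi (munit K x y) u v != 0.
Proof.
move: iso => [[Hmap Hinj _ _ Hscal] _] xy; have exy := munit_FI K xy.
apply: contrapT => Hz.
have phi0 : phi (munit K x y) = phi (fun s t => 0 * munit K x y s t).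
  rewrite Hscal //; apply: funext => u; apply: funext => v /=; rewrite mul0r.
  apply/eqP; apply: contrapT => /negP nz; apply: Hz; exists u, v; split=> //.
  by apply: contrapT => nuv; move: nz; rewrite (Hmap _ exy u v nuv) eqxx.
have := congr1 (fun f => f x y) (Hinj _ _ exy (scale_FI 0 exy) phi0).
by rewrite /= mul0r /munit !asboolT //; apply/eqP; exact: oner_neq0.
Qed.

(* The heart of the argument: if phi(e_xy)(u,v) <> 0, then [x,y] has at most
   as many points as [u,v], because the matrices A_ik = phi(e_xz_i)(u,w_k) and
   B_kj = phi(e_z_j y)(w_k,v) multiply to phi(e_xy)(u,v) times the identity. *)
Lemma midpoints_bounded x y (zs : seq {classic T}) u v (L : seq {classic U}) :
  leP x y -> uniq zs -> (forall z, z \in zs -> leP x z /\ leP z y) ->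
  leQ u v -> phi (munit K x y) u v != 0 -> enumerates_interval leQ u v L ->
  (size zs <= size L)%N.
Proof.
move: iso => [[_ _ _ _ Hscal] Hconv] xy uzs Hzs uv nz HL.
pose z (i : 'I_(size zs)) := nth x zs i.
have zin i : leP x (z i) /\ leP (z i) y by apply: Hzs; exact: mem_nth.
pose A := \matrix_(i < size zs, k < size L) phi (munit K x (z i)) u (nth u L k).
pose B := \matrix_(k < size L, j < size zs) phi (munit K (z j) y) (nth u L k) v.
apply: (@scalar_factor_dim _ _ _ A B _ nz); apply/matrixP => i j.
rewrite [RHS]mxE [LHS]mxE.
have [xzi ziy] := zin i; have [_ zjy] := zin j.
have conv_ij := Hconv _ _ _ (munit_FI K xzi) (munit_FI K zjy)
  (scale_FI (kdelta K (z i) (z j)) (munit_FI K xy))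
  (@conv_munit K T leP x y (z i) (z j) xzi ziy).
rewrite -mulr_natl -(@kdelta_nth K T zs x i j uzs (ltn_ord i) (ltn_ord j)).
have /(congr1 (fun f => f u v)) /= <- :=
  Hscal (kdelta K (z i) (z j)) _ (munit_FI K xy).
rewrite (conv_sum uv conv_ij HL) (big_nth u) big_mkord.
by apply: eq_bigr => k _; rewrite !mxE.
Qed.

End FIIsomorphism.

Unset Implicit Arguments.
Set Strict Implicit.
Theorem corollary5 (K : fieldType) (T : Type) (leP : T -> T -> Prop)
  (HP : is_poset leP) (HnLF : ~ locally_finite leP) :
  ~ exists (U : Type) (leQ : U -> U -> Prop),
      [/\ is_poset leQ, locally_finite leQ &
          exists phi : (T -> T -> K) -> (U -> U -> K), FI_I_alg_iso leP leQ phi].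
Proof.
move=> [U [leQ [_ HLF [phi iso]]]].
have [x [y Hxy]] := not_locally_finite_interval HnLF.
have xy : leP x y.
  by have [z [[xz zy] _]] := Hxy [::]; exact: poset_trans HP _ _ _ xz zy.
have [u [v [uv nz]]] := iso_munit_nonzero iso xy.
have [L HL] := interval_enum HLF u v.
have [zs [szs uzs Hzs]] := infinite_uniq_seq Hxy (size L).+1.
by have := midpoints_bounded iso xy uzs Hzs uv nz HL; rewrite szs ltnn.
Qed.
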